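(* Let $N\ge2$, let $\Omega$ be an $N\times N$ nonnegative matrix with zero diagonal and positive row sums $k_i=\sum_j\Omega_{ij}$ whose associated directed graph (edge $i\to j$ iff $\Omega_{ij}>0$) is strongly connected, and let $\mathcal L_{ij}=\delta_{ij}-\Omega_{ij}/k_i$. Let $\nu$ be a nonzero Borel measure on $(0,\infty)$ with $\int_0^\infty\min\{1,\tau\}\,\nu(d\tau)<\infty$. Then the matrix integral $$g(\mathcal L)=\int_0^\infty\big(\mathbf 1-e^{-\tau\mathcal L}\big)\,\nu(d\tau)$$ converges entrywise and satisfies: (i) $\sum_{j=1}^N g(\mathcal L)_{ij}=0$ for every $i$; (ii) $g(\mathcal L)_{ii}>0$ for every $i$; (iii) $g(\mathcal L)_{ij}<0$ for all $i\neq j$. Consequently the matrix $W^{(g)}_{ij}=\delta_{ij}-g(\mathcal L)_{ij}/g(\mathcal L)_{ii}$ is row-stochastic with $W^{(g)}_{ii}=0$ and $W^{(g)}_{ij}>0$ for all $i\ne j$.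
   Context: $\mathbf 1$ denotes the identity matrix, $\delta_{ij}$ the Kronecker delta. The scalar function $g(\mu)=\int_0^\infty(1-e^{-\tau\mu})\nu(d\tau)$ is a Bernstein function with $g(0)=0$. *)

From HB Require Import structures.
From mathcomp Require Import all_boot all_order all_algebra.
From mathcomp Require Import all_classical all_reals all_analysis.
Set Implicit Arguments. Unset Strict Implicit. Unset Printing Implicit Defensive.
Import Order.TTheory GRing.Theory Num.Theory.
Import numFieldNormedType.Exports.
Local Open Scope classical_set_scope.
Local Open Scope ring_scope.

Definition expmx (R : realType) (N : nat) (A : 'M[R]_N) : 'M[R]_N :=
  limn (series (fun k : nat => (k`!%:R)^-1 *: A ^+ k)).

Definition rowsum (R : realType) (N : nat) (Om : 'M[R]_N) (i : 'I_N) : R :=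
  \sum_(j < N) Om i j.

Definition rw_laplacian (R : realType) (N : nat) (Om : 'M[R]_N) : 'M[R]_N :=
  \matrix_(i, j) ((i == j)%:R - Om i j / rowsum Om i).

Definition strongly_connected (R : realType) (N : nat) (Om : 'M[R]_N) : Prop :=
  forall i j : 'I_N, connect (fun a b : 'I_N => 0 < Om a b) i j.

Definition g_integrand (R : realType) (N : nat) (L : 'M[R]_N) (tau : R) : 'M[R]_N :=
  1%:M - expmx (- tau *: L).

Definition posR (R : realType) : set R := `]0%R, +oo[%classic.
Arguments posR R : clear implicits.

Definition g_mx (R : realType) (nu : {measure set R -> \bar R}) (N : nat)
    (L : 'M[R]_N) : 'M[R]_N :=
  \matrix_(i, j) Rintegral nu (posR R) (fun tau => g_integrand L tau i j).

Definition W_mx (R : realType) (N : nat) (G : 'M[R]_N) : 'M[R]_N :=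
  \matrix_(i, j) ((i == j)%:R - G i j / G i i).

From HB Require Import structures.
From mathcomp Require Import all_boot all_order all_algebra.
From mathcomp Require Import all_classical all_reals all_analysis.
From mathcomp Require Import ring lra measurable_realfun.
Set Implicit Arguments. Unset Strict Implicit. Unset Printing Implicit Defensive.
Import Order.TTheory GRing.Theory Num.Theory.
Import numFieldNormedType.Exports.
Local Open Scope classical_set_scope.
Local Open Scope ring_scope.

(* Write L = 1 - P, where P = D^(-1) Omega is the (row-stochastic, irreducible)
   transition matrix of the random walk on the weighted graph.  Since the
   identity commutes with P, e^(-tL) = e^(-t) e^(tP) =: H(t), the heat kernel of
   the continuous-time walk; we prove this factorisation for the matrix
   exponential series via a dominated Cauchy-product (Mertens) theorem.
   H(t) is row-stochastic, H(t)_ii >= e^(-t), and H(t)_ij > 0 for t > 0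
   whenever j is reachable from i.  Hence the integrand 1 - H(t) of g(L) has
   entries bounded by 1 - e^(-t) <= min(1, t), which makes them nu-integrable;
   its rows sum to 0 and its off-diagonal entries are strictly negative, so
   the same holds for g(L) (as nu charges (0, oo)).  Finally, any matrix with
   zero row sums and negative off-diagonal entries has a positive diagonal
   (when N >= 2), and then W = 1 - diag(G)^(-1) G is row-stochastic with zero
   diagonal and positive off-diagonal entries. *)

Section CauchyProduct.
Variable R : realType.
Implicit Types (a b alpha beta : nat -> R) (A B x y : R) (n : nat).

Definition cauchy a b k : R := \sum_(0 <= m < k.+1) a (k - m)%N * b m.

(* The terms a_j b_m with j, m < n and j + m >= n: what separates the product
   of two partial sums from the partial sum of the Cauchy product. *)
Definition cauchy_corner a b n : R :=
  \sum_(0 <= j < n) \sum_(n - j <= m < n) a j * b m.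

Lemma sum_triangle (f : nat -> nat -> R) n :
  \sum_(0 <= k < n) \sum_(0 <= m < k.+1) f (k - m)%N m =
  \sum_(0 <= j < n) \sum_(0 <= m < n - j) f j m.
Proof.
elim: n => [|n IH]; first by rewrite !big_geq.
rewrite big_nat_recr //= IH.
rewrite [RHS](eq_big_nat _ _
  (F2 := fun j => \sum_(0 <= m < n - j) f j m + f j (n - j)%N)); last first.
  by move=> j /andP[_ jn]; rewrite subSn // big_nat_recr.
rewrite big_split /= [X in _ = X + _]big_nat_recr //= subnn.
rewrite [X in _ + X + _]big_geq // addr0; congr (_ + _).
rewrite big_nat_rev /= add0n; apply: eq_big_nat => j /andP[_ jn].
by rewrite subSS subKn.
Qed.

Lemma series_mul_cauchy a b n :
  series a n * series b n = series (cauchy a b) n + cauchy_corner a b n.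
Proof.
rewrite /series /= /cauchy (sum_triangle (fun j m => a j * b m)).
rewrite -big_split /= big_distrl /=.
apply: eq_big_nat => j /andP[_ jn]; rewrite big_distrr /= -big_cat_nat //.
exact: leq_subr.
Qed.

Lemma cvg_series_cauchy_dominated a b alpha beta A B :
  (forall j, `|a j| <= alpha j) -> (forall m, `|b m| <= beta m) ->
  cvgn (series alpha) -> cvgn (series beta) ->
  series (cauchy alpha beta) @ \oo --> limn (series alpha) * limn (series beta) ->
  series a @ \oo --> A -> series b @ \oo --> B ->
  series (cauchy a b) @ \oo --> A * B.
Proof.
move=> ha hb ca cb cab sa sb.
have cauchyE c d : series (cauchy c d) =
    (fun n => series c n * series d n - cauchy_corner c d n).
  by apply: funext => n; rewrite series_mul_cauchy addrK.
have corner_dom0 : cauchy_corner alpha beta @ \oo --> 0.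
  have -> : cauchy_corner alpha beta = (fun n => series alpha n * series beta n
      - series (cauchy alpha beta) n).
    by apply: funext => n; rewrite series_mul_cauchy addrC addKr.
  rewrite -(subrr (limn (series alpha) * limn (series beta))).
  by apply: cvgB => //; apply: cvgM.
have corner0 : cauchy_corner a b @ \oo --> 0.
  apply: norm_cvg0; apply: (squeeze_cvgr _ (cvg_cst 0) corner_dom0).
  near=> n; rewrite normr_ge0 /=; apply: (le_trans (ler_norm_sum _ _ _)).
  apply: ler_sum => j _; apply: (le_trans (ler_norm_sum _ _ _)).
  by apply: ler_sum => m _; rewrite normrM ler_pM.
by rewrite cauchyE -[X in _ --> X]subr0; apply: cvgB => //; apply: cvgM.
Unshelve. all: by end_near. Qed.

(* The binomial theorem, read as a Cauchy product of exponential series. *)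
Lemma cauchy_exp_coeff x y : cauchy (exp_coeff x) (exp_coeff y) = exp_coeff (x + y).
Proof.
apply: funext => k; rewrite /cauchy /exp_coeff /= exprDn big_mkord.
rewrite big_distrl /=; apply: eq_bigr => i _.
have ik : (i <= k)%N by rewrite -ltnS.
have := bin_fact ik => /(congr1 (fun x : nat => x%:R : R)); rewrite !natrM => hf.
have h1 : (k - i)`!%:R != 0 :> R by rewrite pnatr_eq0 -lt0n fact_gt0.
have h2 : i`!%:R != 0 :> R by rewrite pnatr_eq0 -lt0n fact_gt0.
rewrite -hf -mulr_natr; field.
by rewrite h1 h2 /= pnatr_eq0 -lt0n bin_gt0.
Qed.

Lemma cvg_series_cauchy_exp x y :
  series (cauchy (exp_coeff x) (exp_coeff y)) @ \oo --> expR x * expR y.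
Proof.
by rewrite cauchy_exp_coeff -expRD; apply: is_cvg_series_exp_coeff.
Qed.

Lemma norm_exp_coeff x m : `|exp_coeff x m| = exp_coeff `|x| m.
Proof. by rewrite /exp_coeff /= normrM normfV normrX [`|_%:R|]ger0_norm. Qed.

End CauchyProduct.

Lemma cvg_mx_entrywise (R : realType) m n (u : nat -> 'M[R]_(m, n)) (l : 'M[R]_(m, n)) :
  (forall i j, (fun k => u k i j) @ \oo --> l i j) -> u @ \oo --> l.
Proof.
move=> h; apply/cvg_mx_entourageP => A entA; rewrite near_map.
apply: (@filter_forall nat 'I_m (fun i k => forall j, (l i j, u k i j) \in A)) => i.
apply: (@filter_forall nat 'I_n (fun j k => (l i j, u k i j) \in A)) => j.
have H := cvg_entourage (h i j) entA.
near=> k; rewrite inE; near: k; exact: H.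
Unshelve. all: by end_near. Qed.

Lemma scalemx_exp (R : comNzRingType) n (c : R) (A : 'M[R]_n) k :
  (c *: A) ^+ k = c ^+ k *: A ^+ k.
Proof.
elim: k => [|k IH]; first by rewrite !expr0 scale1r.
by rewrite !exprS IH -!mulmxE -scalemxAr !scalemxAl scalerA [c ^+ k * c]mulrC.
Qed.

Lemma sum_kronecker (R : pzSemiRingType) n (i : 'I_n) : \sum_j ((i == j)%:R : R) = 1.
Proof.
rewrite (bigD1 i) //= eqxx big1 ?addr0 // => j /negPf.
by rewrite eq_sym => ->.
Qed.

Section StochasticPowers.
Variables (R : realType) (N : nat) (P : 'M[R]_N).
Hypothesis P_ge0 : forall i j, 0 <= P i j.
Hypothesis P_row1 : forall i, \sum_j P i j = 1.

Lemma mx_pow0_entry i j : (P ^+ 0) i j = (i == j)%:R.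
Proof. by rewrite expr0 mxE. Qed.

Lemma mx_powS_entry m i j : (P ^+ m.+1) i j = \sum_l P i l * (P ^+ m) l j.
Proof. by rewrite exprS -mulmxE mxE. Qed.

Lemma mx_pow_ge0 m i j : 0 <= (P ^+ m) i j.
Proof.
elim: m i j => [|m IH] i j; first by rewrite mx_pow0_entry ler0n.
by rewrite mx_powS_entry; apply: sumr_ge0 => l _; rewrite mulr_ge0.
Qed.

Lemma mx_pow_row1 m i : \sum_j (P ^+ m) i j = 1.
Proof.
elim: m i => [|m IH] i.
  by under eq_bigr do rewrite mx_pow0_entry; rewrite sum_kronecker.
under eq_bigr do rewrite mx_powS_entry.
rewrite exchange_big /= -(P_row1 i); apply: eq_bigr => l _.
by rewrite -big_distrr /= IH mulr1.
Qed.

Lemma mx_pow_le1 m i j : (P ^+ m) i j <= 1.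
Proof.
rewrite -(mx_pow_row1 m i) (bigD1 j) //= lerDl.
by apply: sumr_ge0 => l _; exact: mx_pow_ge0.
Qed.

Lemma connect_mx_pow_gt0 i j :
  connect (fun a b => 0 < P a b) i j -> exists m, 0 < (P ^+ m) i j.
Proof.
move=> /connectP [p pth ->] {j}.
elim: p i pth => [|a p IH] i /=.
  by move=> _; exists 0%N; rewrite mx_pow0_entry eqxx ltr01.
move=> /andP[Pia pth]; have [m Pm] := IH a pth; exists m.+1.
rewrite mx_powS_entry (bigD1 a) //=; apply: ltr_wpDr.
  by apply: sumr_ge0 => l _; rewrite mulr_ge0 ?mx_pow_ge0.
by rewrite mulr_gt0.
Qed.

(* The entries (e^(tP))_ij = \sum_m t^m/m! (P^m)_ij, as absolutely convergent series. *)
Definition exp_term t i j m : R := exp_coeff t m * (P ^+ m) i j.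
Definition exp_entry t i j : R := limn (series (exp_term t i j)).

Lemma exp_term_bound t i j m : `|exp_term t i j m| <= exp_coeff `|t| m.
Proof.
rewrite /exp_term normrM norm_exp_coeff -[X in _ <= X]mulr1 ler_wpM2l //.
  exact: exp_coeff_ge0.
by rewrite ger0_norm ?mx_pow_ge0 ?mx_pow_le1.
Qed.

Lemma exp_entry_cvg t i j : cvgn (series (exp_term t i j)).
Proof.
apply: normed_cvg; apply: (@series_le_cvg _ _ (exp_coeff `|t|)).
- by move=> n /=.
- by move=> n; exact: exp_coeff_ge0.
- by move=> n; exact: exp_term_bound.
- exact: is_cvg_series_exp_coeff.
Qed.

Lemma exp_series_term_shift a t k i j :
  (k`!%:R^-1 *: (a%:M + t *: P) ^+ k) i j = cauchy (exp_coeff a) (exp_term t i j) k.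
Proof.
rewrite exprDn_comm; last by rewrite /GRing.comm -!mulmxE scalar_mxC.
rewrite mxE summxE /cauchy big_mkord big_distrr /=; apply: eq_bigr => m _.
rewrite mulmxnE -rmorphXn -mulmxE mul_scalar_mx scalemx_exp scalerA !mxE.
rewrite /exp_term /exp_coeff /=.
have mk : (m <= k)%N by rewrite -ltnS.
have := bin_fact mk => /(congr1 (fun x : nat => x%:R : R)); rewrite !natrM => hf.
have h1 : (k - m)`!%:R != 0 :> R by rewrite pnatr_eq0 -lt0n fact_gt0.
have h2 : m`!%:R != 0 :> R by rewrite pnatr_eq0 -lt0n fact_gt0.
rewrite -hf -mulr_natr; field.
by rewrite h1 h2 /= pnatr_eq0 -lt0n bin_gt0.
Qed.

Lemma expmx_shift a t :
  expmx (a%:M + t *: P) = \matrix_(i, j) (expR a * exp_entry t i j).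
Proof.
rewrite /expmx; apply: cvg_lim; first exact: norm_hausdorff.
apply: cvg_mx_entrywise => i j; rewrite mxE.
have -> : (fun k => series (fun k0 : nat => k0`!%:R^-1 *: (a%:M + t *: P) ^+ k0) k i j)
    = series (cauchy (exp_coeff a) (exp_term t i j)).
  apply: funext => n; rewrite /series /= summxE; apply: eq_bigr => k _.
  exact: exp_series_term_shift.
apply: (cvg_series_cauchy_dominated (alpha := exp_coeff `|a|) (beta := exp_coeff `|t|)).
- by move=> m; rewrite norm_exp_coeff.
- exact: exp_term_bound.
- exact: is_cvg_series_exp_coeff.
- exact: is_cvg_series_exp_coeff.
- exact: cvg_series_cauchy_exp.
- exact: is_cvg_series_exp_coeff.
- exact: exp_entry_cvg.
Qed.

End StochasticPowers.

Section HeatKernel.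
Variables (R : realType) (N : nat) (P : 'M[R]_N).
Hypothesis P_ge0 : forall i j, 0 <= P i j.
Hypothesis P_row1 : forall i, \sum_j P i j = 1.

Definition heat t i j : R := expR (- t) * exp_entry P t i j.

Lemma expmx_heat t : expmx (- t *: (1%:M - P)) = \matrix_(i, j) heat t i j.
Proof.
have -> : - t *: (1%:M - P) = (- t)%:M + t *: P.
  by apply/matrixP => i j; rewrite !mxE; case: (i == j) => /=; ring.
by rewrite expmx_shift.
Qed.

Lemma exp_term_ge0 t i j m : 0 <= t -> 0 <= exp_term P t i j m.
Proof. by move=> t0; rewrite mulr_ge0 ?exp_coeff_ge0 ?mx_pow_ge0. Qed.

(* For t >= 0, the series of e^(tP) has nonnegative terms, so it dominates each term. *)
Lemma exp_entry_ge_term t i j m : 0 <= t -> exp_term P t i j m <= exp_entry P t i j.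
Proof.
move=> t0; apply: le_trans (_ : series (exp_term P t i j) m.+1 <= _).
  rewrite /series /= big_nat_recr //= lerDr.
  by apply: sumr_ge0 => k _; exact: exp_term_ge0.
apply: nondecreasing_cvgn_le; last exact: exp_entry_cvg.
by apply: nondecreasing_series => k _ _; exact: exp_term_ge0.
Qed.

(* The rows of e^(tP) sum to e^t, since those of P^m sum to 1. *)
Lemma exp_entry_row t i : \sum_j exp_entry P t i j = expR t.
Proof.
apply/esym/cvg_lim => //.
have -> : series (exp_coeff t) = fun n => \sum_j series (exp_term P t i j) n.
  apply: funext => n; rewrite /series /= exchange_big /=; apply: eq_bigr => k _.
  by rewrite /exp_term -big_distrr /= mx_pow_row1 ?mulr1.
apply: (cvg_big add_continuous) => // j _; exact: exp_entry_cvg.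
Qed.

Lemma heat_row1 t i : \sum_j heat t i j = 1.
Proof.
by rewrite -big_distrr /= exp_entry_row expRN mulVf // gt_eqF // expR_gt0.
Qed.

Lemma heat_ge0 t i j : 0 <= t -> 0 <= heat t i j.
Proof.
move=> t0; rewrite mulr_ge0 ?expR_ge0 //.
by apply: le_trans (exp_entry_ge_term i j 0 t0); exact: exp_term_ge0.
Qed.

Lemma heat_diag_ge t i : 0 <= t -> expR (- t) <= heat t i i.
Proof.
move=> t0; rewrite -[X in X <= _]mulr1 ler_wpM2l ?expR_ge0 //.
apply: le_trans (exp_entry_ge_term i i 0 t0).
by rewrite /exp_term mx_pow0_entry eqxx /exp_coeff /= expr0 fact0 invr1 !mulr1.
Qed.

Lemma heat_offdiag_le t i j : 0 <= t -> i != j -> heat t i j <= 1 - heat t i i.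
Proof.
move=> t0 ij; rewrite -(heat_row1 t i) (bigD1 i) //= (bigD1 j) 1?eq_sym //=.
have : 0 <= \sum_(k | (k != i) && (k != j)) heat t i k.
  by apply: sumr_ge0 => k _; exact: heat_ge0.
lra.
Qed.

Lemma heat_gt0 t i j : 0 < t -> connect (fun a b => 0 < P a b) i j -> 0 < heat t i j.
Proof.
move=> t0 /(connect_mx_pow_gt0 P_ge0) [m Pm]; rewrite mulr_gt0 ?expR_gt0 //.
apply: lt_le_trans (exp_entry_ge_term i j m (ltW t0)).
by rewrite mulr_gt0 // /exp_coeff /= divr_gt0 ?exprn_gt0 // ltr0n fact_gt0.
Qed.

Lemma heat_dev_le t i j : 0 <= t -> `|(i == j)%:R - heat t i j| <= 1 - expR (- t).
Proof.
move=> t0; have Hii := heat_diag_ge i t0.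
have Hii1 : heat t i i <= 1.
  rewrite -(heat_row1 t i) (bigD1 i) //= lerDl.
  by apply: sumr_ge0 => k _; exact: heat_ge0.
case: eqP => [<-|/eqP ij] /=; first by rewrite ger0_norm; lra.
rewrite sub0r normrN ger0_norm ?heat_ge0 //.
by apply: le_trans (heat_offdiag_le t0 ij) _; lra.
Qed.

Lemma measurable_heat i j : measurable_fun setT (fun t => heat t i j).
Proof.
apply: measurable_funM.
  by apply: measurableT_comp => //; exact: measurable_funN.
apply: (measurable_fun_cvg (h := fun n t => series (exp_term P t i j) n)).
  move=> n; apply: measurable_sum => m; rewrite /exp_term /exp_coeff /=.
  apply: measurable_funM => //; apply: measurable_funM => //.
by move=> t _; exact: exp_entry_cvg.
Qed.

End HeatKernel.

Section RealIntegrals.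
Context d (T : measurableType d) (R : realType) (mu : {measure set T -> \bar R}).
Variable D : set T.
Hypothesis mD : measurable D.

Lemma Rintegral_gt0 (f : T -> R) :
  mu.-integrable D (EFin \o f) -> (forall t, D t -> 0 < f t) -> mu D != 0%E ->
  0 < Rintegral mu D f.
Proof.
move=> fi fpos mu0.
have ge0 : 0 <= Rintegral mu D f by apply: Rintegral_ge0 => t /fpos /ltW.
rewrite lt_def ge0 andbT; apply/negP => /eqP int0.
have int_abs0 : (\int[mu]_(x in D) `|(EFin \o f) x| = 0)%E.
  rewrite -[0%E]/(0%:E) -int0 /Rintegral fineK ?(integrable_fin_num mD fi) //.
  apply: eq_integral => t /set_mem /fpos /ltW ft.
  by rewrite /comp gee0_abs // lee_fin.
have /integrableP [mf _] := fi.
have [M [mM muM0 sub]] := (ae_eq_integral_abs _ mD mf).1 int_abs0.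
move: mu0; rewrite eq_le measure_ge0 andbT -muM0; apply/negP/negPn.
apply: le_measure; rewrite ?inE // => t Dt; apply: sub => /= /(_ Dt) /= /eqP.
by rewrite eqe gt_eqF // fpos.
Qed.

Lemma Rintegral_lt0 (f : T -> R) :
  mu.-integrable D (EFin \o f) -> (forall t, D t -> f t < 0) -> mu D != 0%E ->
  Rintegral mu D f < 0.
Proof.
move=> fi fneg mu0.
have fNi : mu.-integrable D (EFin \o (fun t => - f t)).
  by rewrite (_ : _ \o _ = -%E \o (EFin \o f)); [exact: integrableN | apply: funext].
have -> : Rintegral mu D f = - Rintegral mu D (fun t => - f t).
  rewrite -mulN1r -RintegralZl //.
  by apply: eq_Rintegral => t _; rewrite mulN1r opprK.
by rewrite oppr_lt0; apply: Rintegral_gt0 => // t /fneg; rewrite oppr_gt0.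
Qed.

Lemma Rintegral_sum (I : Type) (s : seq I) (f : I -> T -> R) :
  (forall i, mu.-integrable D (EFin \o f i)) ->
  \sum_(i <- s) Rintegral mu D (f i) = Rintegral mu D (fun t => \sum_(i <- s) f i t).
Proof.
move=> fi; elim: s => [|a s IH].
  rewrite big_nil; under eq_Rintegral do rewrite big_nil.
  by rewrite Rintegral_cst // mul0r.
rewrite big_cons IH -RintegralD //; last first.
  rewrite (_ : _ \o _ = (fun t => \sum_(i <- s) (EFin \o f i) t)%E).
    by apply: integrable_sum => // i _.
  by apply: funext => t /=; rewrite sumEFin.
by under [RHS]eq_Rintegral do rewrite big_cons.
Qed.

End RealIntegrals.

Lemma measurable_posR {R : realType} : measurable (posR R).
Proof. exact: measurable_itv. Qed.

Lemma integrable_min1 (R : realType) (nu : {measure set R -> \bar R}) (h : R -> R) :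
  (\int[nu]_(tau in (posR R)) (Num.min 1 tau)%:E < +oo)%E ->
  measurable_fun (posR R) h ->
  (forall t, posR R t -> `|h t| <= Num.min 1 t) ->
  nu.-integrable (posR R) (fun t => (h t)%:E).
Proof.
move=> hint mh hb.
apply: (@le_integrable _ _ _ nu _ measurable_posR _ (fun t => (Num.min 1 t)%:E)).
- exact/measurable_EFinP.
- move=> t pt; rewrite !abse_EFin lee_fin (le_trans (hb t pt)) //.
  exact: ler_norm.
apply/integrableP; split.
  by apply/measurable_EFinP; apply: measurable_minr.
rewrite (eq_integral (fun t : R => (Num.min 1 t)%:E)) //.
by move=> t /set_mem pt; rewrite abse_EFin ger0_norm // (le_trans _ (hb t pt)).
Qed.

Lemma one_sub_expRN_le_min (R : realType) (t : R) :
  0 < t -> 1 - expR (- t) <= Num.min 1 t.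
Proof.
move=> t0; rewrite le_min; apply/andP; split.
  by have := expR_ge0 (- t); lra.
by have := expR_ge1Dx (- t); lra.
Qed.

Section BernsteinOfLaplacian.
Variables (R : realType) (N : nat) (P : 'M[R]_N) (nu : {measure set R -> \bar R}).
Hypothesis P_ge0 : forall i j, 0 <= P i j.
Hypothesis P_row1 : forall i, \sum_j P i j = 1.
Hypothesis P_irr : forall i j, connect (fun a b => 0 < P a b) i j.
Hypothesis nu_pos : nu (posR R) != 0%E.
Hypothesis nu_min1 : (\int[nu]_(tau in (posR R)) (Num.min 1 tau)%:E < +oo)%E.

Lemma g_integrandE t i j : g_integrand (1%:M - P) t i j = (i == j)%:R - heat P t i j.
Proof. by rewrite /g_integrand expmx_heat // !mxE. Qed.

Lemma g_integrand_le i j t :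
  posR R t -> `|g_integrand (1%:M - P) t i j| <= Num.min 1 t.
Proof.
rewrite /posR /= in_itv /= andbT => t0.
rewrite g_integrandE (le_trans (heat_dev_le P_ge0 P_row1 i j (ltW t0))) //.
exact: one_sub_expRN_le_min.
Qed.

Lemma measurable_g_integrand i j :
  measurable_fun (posR R) (fun t => g_integrand (1%:M - P) t i j).
Proof.
under eq_fun do rewrite g_integrandE.
by apply: measurable_funTS; apply: measurable_funB => //; exact: measurable_heat.
Qed.

Lemma g_integrable i j :
  nu.-integrable (posR R) (fun tau => (g_integrand (1%:M - P) tau i j)%:E).
Proof.
apply: integrable_min1 => //; first exact: measurable_g_integrand.
exact: g_integrand_le.
Qed.

(* Conservation: the rows of g(1 - P) sum to 0, since those of H(t) sum to 1. *)
Lemma g_mx_row0 i : \sum_j g_mx nu (1%:M - P) i j = 0.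
Proof.
under eq_bigr do rewrite mxE.
rewrite (@Rintegral_sum _ _ _ nu _ measurable_posR _ _
  (fun j t => g_integrand (1%:M - P) t i j));
  last by move=> j; exact: g_integrable.
under eq_Rintegral => t _.
  rewrite (eq_bigr _ (fun j _ => g_integrandE t i j)) sumrB sum_kronecker.
  by rewrite heat_row1 // subrr; over.
by rewrite Rintegral_cst ?mul0r //; exact: measurable_posR.
Qed.

(* Irreducibility: every off-diagonal entry of g(1 - P) is negative. *)
Lemma g_mx_offdiag_lt0 i j : i != j -> g_mx nu (1%:M - P) i j < 0.
Proof.
move=> ij; rewrite mxE; apply: Rintegral_lt0 => //; first exact: measurable_posR.
  exact: g_integrable.
move=> t; rewrite /posR /= in_itv /= andbT => t0.
by rewrite g_integrandE (negPf ij) sub0r oppr_lt0 heat_gt0.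
Qed.

End BernsteinOfLaplacian.

Section ZeroRowSumMatrix.
Variables (R : realType) (N : nat) (G : 'M[R]_N).
Hypothesis G_row0 : forall i, \sum_j G i j = 0.
Hypothesis G_offdiag_lt0 : forall i j, i != j -> G i j < 0.

(* With at least two states, the diagonal balances the negative off-diagonal
   entries, hence is positive. *)
Lemma zero_row_sum_diag_gt0 i : (2 <= N)%N -> 0 < G i i.
Proof.
move=> N2; have [j ij] : exists j : 'I_N, i != j.
  have [N0 N1] : (0 < N)%N /\ (1 < N)%N by split; [exact: ltnW | exact: N2].
  case: (eqVneq i (Ordinal N0)) => [->|]; last by exists (Ordinal N0).
  by exists (Ordinal N1).
have := G_row0 i; rewrite (bigD1 i) //= (bigD1 j) 1?eq_sym //=.
have : \sum_(k | (k != i) && (k != j)) G i k <= 0.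
  by apply: sumr_le0 => k /andP[ki _]; rewrite ltW // G_offdiag_lt0 // eq_sym.
have := G_offdiag_lt0 ij; lra.
Qed.

Hypothesis G_diag_gt0 : forall i, 0 < G i i.

Lemma W_mx_row1 i : \sum_j W_mx G i j = 1.
Proof.
under eq_bigr do rewrite mxE.
by rewrite sumrB -mulr_suml G_row0 mul0r subr0 sum_kronecker.
Qed.

Lemma W_mx_diag0 i : W_mx G i i = 0.
Proof. by rewrite mxE eqxx divff ?subrr // gt_eqF. Qed.

Lemma W_mx_offdiag_gt0 i j : i != j -> 0 < W_mx G i j.
Proof.
move=> ij; rewrite mxE (negPf ij) sub0r oppr_gt0.
by rewrite pmulr_llt0 ?invr_gt0 // G_offdiag_lt0.
Qed.

Lemma W_mx_ge0 i j : 0 <= W_mx G i j.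
Proof.
by case: (eqVneq i j) => [->|ij]; rewrite ?W_mx_diag0 // ltW ?W_mx_offdiag_gt0.
Qed.

End ZeroRowSumMatrix.

Definition transition_mx (R : realType) N (Om : 'M[R]_N) : 'M[R]_N :=
  \matrix_(i, j) (Om i j / rowsum Om i).

Lemma rw_laplacianE (R : realType) N (Om : 'M[R]_N) :
  rw_laplacian Om = 1%:M - transition_mx Om.
Proof. by apply/matrixP => i j; rewrite !mxE. Qed.

Section TransitionMatrix.
Variables (R : realType) (N : nat) (Om : 'M[R]_N).
Hypothesis Om_ge0 : forall i j, 0 <= Om i j.
Hypothesis rowsum_gt0 : forall i, 0 < rowsum Om i.

Lemma transition_ge0 i j : 0 <= transition_mx Om i j.
Proof. by rewrite mxE divr_ge0 // ltW. Qed.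

Lemma transition_row1 i : \sum_j transition_mx Om i j = 1.
Proof.
under eq_bigr do rewrite mxE.
by rewrite -mulr_suml -/(rowsum Om i) divff // gt_eqF.
Qed.

(* P and Omega have the same directed graph. *)
Lemma transition_connect i j :
  strongly_connected Om -> connect (fun a b => 0 < transition_mx Om a b) i j.
Proof.
move=> sc; rewrite (eq_connect (e' := fun a b => 0 < Om a b)) //.
by move=> a b /=; rewrite mxE pmulr_lgt0 // invr_gt0.
Qed.

End TransitionMatrix.

Unset Implicit Arguments.
Set Strict Implicit.
Theorem mainTheorem3 (R : realType) (N : nat) (Om : 'M[R]_N)
  (nu : {measure set R -> \bar R}) :
  (2 <= N)%N ->
  (forall i j, 0 <= Om i j) ->
  (forall i, Om i i = 0) ->
  (forall i, 0 < rowsum Om i) ->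
  strongly_connected Om ->
  nu (posR R) != 0%E ->
  (\int[nu]_(tau in (posR R)) (Num.min 1 tau)%:E < +oo)%E ->
  let L := rw_laplacian Om in
  let G := g_mx nu L in
  let W := W_mx G in
  (forall i j, nu.-integrable (posR R) (fun tau => (g_integrand L tau i j)%:E)) /\
  (forall i, \sum_(j < N) G i j = 0) /\
  (forall i, 0 < G i i) /\
  (forall i j, i != j -> G i j < 0) /\
  (forall i, \sum_(j < N) W i j = 1) /\
  (forall i j, 0 <= W i j) /\
  (forall i, W i i = 0) /\
  (forall i j, i != j -> 0 < W i j).
Proof.
move=> N2 Om_ge0 _ rowsum_gt0 sc nu_pos nu_min1 L G W.
rewrite {}/W {}/G {}/L rw_laplacianE.
have P_ge0 := transition_ge0 Om_ge0 rowsum_gt0.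
have P_row1 := transition_row1 rowsum_gt0.
have P_irr i j := transition_connect rowsum_gt0 i j sc.
have G_row0 := g_mx_row0 P_ge0 P_row1 nu_min1.
have G_offdiag := g_mx_offdiag_lt0 P_ge0 P_row1 P_irr nu_pos nu_min1.
have G_diag i := zero_row_sum_diag_gt0 G_row0 G_offdiag i N2.
split; first exact: g_integrable.
split; first exact: G_row0.
split; first exact: G_diag.
split; first exact: G_offdiag.
split; first exact: W_mx_row1.
split; first exact: W_mx_ge0.
split; first exact: W_mx_diag0.
exact: W_mx_offdiag_gt0.
Qed.
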